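(* Let $y$ be such that $\dot y$ is positive, $\mathcal N$-predictable, and $y(\eta,\cdot)=\int_0^\cdot\dot y(\eta,s)ds$ is a finite increasing homeomorphism of $[0,\infty)$ for the configurations considered. There exists a weak solution to the g-Hawkes problem $\text{g-H}_y$ if and only if there exists a solution to the g-Hawkes martingale problem $\text{g-H}^m_y$.
   Context: $\mathfrak N$ is the set of locally finite simple configurations on $(0,\infty)$ (point processes), identified with counting paths; $\mathcal N_t=\sigma(\omega([0,s]),s\le t)$. $y^*(\eta,t)=\inf\{s:y(\eta,s)>t\}$. A filtered probability space is $(\Omega,\mathcal F,\mathbf P)$ with a right-continuous filtration $\mathcal F$. A solution of $\text{g-H}_y$ on $(\Omega,\mathcal F,\mathbf P)$ is a pair $(Z,N)$ such that: (1) $Z$ and $N$ are a.s. point processes; (2) for every $t\ge0$, $y(Z,t)$ is an $\mathcal F$-stopping time; (3) $N(t)-t$ is an $\mathcal F$-local martingale; (4) $\mathbf P$-a.s., $Z(t)=N(y(Z,t))$ for all $t\ge0$. A solution is weak if the filtered probability space has to be specified (i.e. a solution exists on some filtered probability space). $(Z,\mathcal F)$ on $(\Omega,\mathcal F,\mathbf P)$ solves the martingale problem $\text{g-H}^m_y$ if $Z$ is a point process, $(y^*(Z,t))_t$ is $\mathcal F$-adapted, and $t\mapsto Z(y^*(Z,t))-t$ is an $\mathcal F$-local martingale. *)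

From HB Require Import structures.
From mathcomp Require Import all_boot all_order all_algebra.
From mathcomp Require Import all_classical all_reals all_analysis.

Set Implicit Arguments.
Unset Strict Implicit.
Unset Printing Implicit Defensive.

Import Order.TTheory GRing.Theory Num.Theory.
Import numFieldNormedType.Exports.
Local Open Scope classical_set_scope.
Local Open Scope ring_scope.

Section Defs.
Variable R : realType.

(* A locally finite simple configuration on (0,oo) is identified with its
   counting path  w t = w([0,t])  (t >= 0): w 0 = 0, nondecreasing,
   right-continuous, with jumps of size at most 1.  Local finiteness is
   automatic since w takes values in nat.  Values at t < 0 are irrelevant. *)
Definition is_counting_path (w : R -> nat) : Prop :=
  [/\ w 0 = 0%N,
      (forall s t, 0 <= s -> s <= t -> (w s <= w t)%N),
      (forall t, 0 <= t -> exists2 e : R, 0 < e &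
          forall s, t <= s -> s < t + e -> w s = w t) &
      (forall t, 0 < t -> exists2 e : R, 0 < e &
          forall s, t - e < s -> s < t -> (w t <= (w s).+1)%N)].

Definition canonical_filtration (t : R) : set (set (R -> nat)) :=
  <<s [set A | exists s k, [/\ 0 <= s, s <= t &
         A = [set w : R -> nat | w s = k]]] >>.

Definition config_time_domain : set ((R -> nat) * R) :=
  [set p | is_counting_path p.1 /\ 0 < p.2].

Definition predictable_sigma : set (set ((R -> nat) * R)) :=
  <<s config_time_domain,
      [set C | exists s t A, [/\ 0 <= s, s <= t, canonical_filtration s A &
          C = config_time_domain `&`
              [set p | A p.1 /\ s < p.2 /\ p.2 <= t]]] >>.

Definition is_predictable (f : (R -> nat) -> R -> R) : Prop :=
  forall B : set R, measurable B ->
    predictable_sigma (config_time_domain `&` [set p | B (f p.1 p.2)]).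

Definition incr_homeo_halfline (f : R -> R) : Prop :=
  [/\ (forall s t, 0 <= s -> s < t -> f s < f t),
      {within [set x | 0 <= x], continuous f} &
      f @` [set x | 0 <= x] = [set x | 0 <= x] ].

Definition admissible_clock (y ydot : (R -> nat) -> R -> R) : Prop :=
  is_predictable ydot /\
  forall eta, is_counting_path eta ->
    [/\ (forall s, 0 < s -> 0 < ydot eta s),
        (forall t, 0 <= t ->
           (y eta t)%:E = (\int[lebesgue_measure]_(s in `[0%R, t]%classic) (ydot eta s)%:E)%E) &
        incr_homeo_halfline (y eta)].

Definition y_star (y : (R -> nat) -> R -> R) (eta : R -> nat) (t : R) : R :=
  inf [set s | 0 <= s /\ t < y eta s].

Section Stoch.
Context {d : measure_display} {Omega : measurableType d}.
Variable P : probability Omega R.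

Definition is_filtration (F : R -> set (set Omega)) : Prop :=
  [/\ (forall t, 0 <= t -> sigma_algebra setT (F t)),
      (forall t, 0 <= t -> F t `<=` measurable),
      (forall s t, 0 <= s -> s <= t -> F s `<=` F t) &
      (forall t A, 0 <= t -> (forall s, t < s -> F s A) -> F t A)].

Definition is_point_process (Z : Omega -> R -> nat) : Prop :=
  (forall t (k : nat), measurable [set w | Z w t = k]) /\
  {ae P, forall w, is_counting_path (Z w)}.

Definition stopping_time (F : R -> set (set Omega)) (T : Omega -> \bar R) :=
  forall u, 0 <= u -> F u [set w | (T w <= u%:E)%E].

Definition adapted (F : R -> set (set Omega)) (M : R -> Omega -> R) :=
  forall t, 0 <= t -> forall B : set R, measurable B -> F t (M t @^-1` B).

(* martingale, defined without conditional expectations: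
   E[M_t 1_A] = E[M_s 1_A] for A in F_s, s <= t *)
Definition martingale (F : R -> set (set Omega)) (M : R -> Omega -> R) :=
  [/\ adapted F M,
      (forall t, 0 <= t -> P.-integrable setT (fun w => (M t w)%:E)) &
      (forall s t A, 0 <= s -> s <= t -> F s A ->
         (\int[P]_(w in A) (M t w)%:E = \int[P]_(w in A) (M s w)%:E)%E)].

Definition tmin (t : R) (x : \bar R) : R := fine (Order.min t%:E x).

Definition stopped (M : R -> Omega -> R) (tau : Omega -> \bar R) :
    R -> Omega -> R := fun t w => M (tmin t (tau w)) w.

Definition local_martingale (F : R -> set (set Omega)) (M : R -> Omega -> R) :=
  exists tau : nat -> Omega -> \bar R,
    [/\ (forall n, stopping_time F (tau n)),
        (forall n w, (0 <= tau n w)%E),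
        (forall n w, (tau n w <= tau n.+1 w)%E),
        {ae P, forall w, (tau n w)%E @[n --> \oo] --> +oo%E} &
        (forall n, martingale F (stopped M (tau n)))].

Definition gH_solution (y : (R -> nat) -> R -> R) (F : R -> set (set Omega))
    (Z N : Omega -> R -> nat) : Prop :=
  [/\ is_point_process Z, is_point_process N,
      (forall t, 0 <= t -> stopping_time F (fun w => (y (Z w) t)%:E)),
      local_martingale F (fun t w => (N w t)%:R - t) &
      {ae P, forall w, forall t, 0 <= t -> Z w t = N w (y (Z w) t)}].

Definition gHm_solution (y : (R -> nat) -> R -> R) (F : R -> set (set Omega))
    (Z : Omega -> R -> nat) : Prop :=
  [/\ is_point_process Z,
      adapted F (fun t w => y_star y (Z w) t) &
      local_martingale F (fun t w => (Z w (y_star y (Z w) t))%:R - t)].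

End Stoch.
End Defs.

Definition exists_weak_gH_solution (R : realType) (y : (R -> nat) -> R -> R)
  : Prop :=
  exists (d : measure_display) (Omega : measurableType d)
         (P : probability Omega R) (F : R -> set (set Omega))
         (Z N : Omega -> R -> nat),
    is_filtration F /\ gH_solution P y F Z N.

Definition exists_gHm_solution (R : realType) (y : (R -> nat) -> R -> R)
  : Prop :=
  exists (d : measure_display) (Omega : measurableType d)
         (P : probability Omega R) (F : R -> set (set Omega))
         (Z : Omega -> R -> nat),
    is_filtration F /\ gHm_solution P y F Z.

From HB Require Import structures.
From mathcomp Require Import all_boot all_order all_algebra.
From mathcomp Require Import all_classical all_reals all_analysis.
From mathcomp Require Import lra measurable_realfun.

(* For every configuration eta, s |-> y(eta,s) is an increasing homeomorphism
   of [0,oo) and y*(eta,.) is its inverse.  Hence the relation Z = N o y(Z)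
   is equivalent to N = Z o y*(Z), the events {y(Z,t) <= u} and
   {y*(Z,u) >= t} coincide (so y(Z,t) is a stopping time iff y*(Z,.) is
   adapted), and N(t) - t is the local martingale Z(y*(Z,t)) - t.
   The hypotheses on Z, N and the localizing sequence only hold almost
   surely; so both implications first remove a null event E: the paths are
   set to 0 on E and every sigma-algebra F_t is enlarged to
   {(A \ E) u (B n E) | A, B in F_t}, on which processes that are
   deterministic on E are adapted. *)

Set Implicit Arguments.
Unset Strict Implicit.
Unset Printing Implicit Defensive.
Import Order.TTheory GRing.Theory Num.Theory.
Import numFieldNormedType.Exports.
Local Open Scope classical_set_scope.
Local Open Scope ring_scope.

Definition hinv (R : realType) (f : R -> R) (t : R) : R :=
  inf [set s : R | 0 <= s /\ t < f s].

Lemma y_star_hinv (R : realType) (y : (R -> nat) -> R -> R) eta t :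
  y_star y eta t = hinv (y eta) t.
Proof. by []. Qed.

Section HalflineHomeomorphism.
Variable R : realType.
Variable f : R -> R.
Hypothesis hf : incr_homeo_halfline f.

Lemma homeo_lt s t : 0 <= s -> 0 <= t -> (f s < f t) = (s < t).
Proof.
case: hf => mono _ _ s0 t0; case: (ltgtP s t) => [st|ts|->]; last by rewrite ltxx.
- exact: mono.
- by apply/negbTE; rewrite -leNgt ltW // mono.
Qed.

Lemma homeo_le s t : 0 <= s -> 0 <= t -> (f s <= f t) = (s <= t).
Proof. by move=> s0 t0; rewrite !leNgt homeo_lt. Qed.

Lemma homeo_ge0 s : 0 <= s -> 0 <= f s.
Proof.
case: hf => _ _ himg s0.
have : (f @` [set x | 0 <= x]) (f s) by exists s.
by rewrite himg.
Qed.

Lemma homeo_surj t : 0 <= t -> exists2 s, 0 <= s & f s = t.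
Proof.
case: hf => _ _ himg t0.
have : [set x : R | 0 <= x] t by [].
by rewrite -himg => -[s s0 <-]; exists s.
Qed.

Lemma homeo0 : f 0 = 0.
Proof.
have [s s0 fs] := homeo_surj (lexx 0).
apply/eqP; rewrite eq_le homeo_ge0 // andbT.
by have := homeo_le (lexx 0) s0; rewrite fs => ->.
Qed.

Lemma hinv_homeo_eq t s : 0 <= s -> f s = t -> hinv f t = s.
Proof.
move=> s0 fst; rewrite /hinv.
have -> : [set u : R | 0 <= u /\ t < f u] = `]s, +oo[%classic.
  apply/seteqP; split => u /=; rewrite in_itv /= andbT.
  - by move=> [u0 tu]; rewrite -(homeo_lt s0 u0) fst.
  - move=> su; have u0 : 0 <= u by rewrite (le_trans s0) // ltW.
    by split => //; rewrite -fst homeo_lt.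
by rewrite inf_itv // bnd_simp.
Qed.

Lemma hinv_ge0 t : 0 <= t -> 0 <= hinv f t.
Proof. by move=> t0; have [s s0 fs] := homeo_surj t0; rewrite (hinv_homeo_eq s0 fs). Qed.

Lemma homeo_hinv t : 0 <= t -> f (hinv f t) = t.
Proof. by move=> t0; have [s s0 fs] := homeo_surj t0; rewrite (hinv_homeo_eq s0 fs). Qed.

Lemma hinv_homeo s : 0 <= s -> hinv f (f s) = s.
Proof. by move=> s0; rewrite (hinv_homeo_eq s0). Qed.

Lemma hinv0 : hinv f 0 = 0.
Proof. exact: hinv_homeo_eq (lexx 0) homeo0. Qed.

(* Below 0 the set defining hinv is all of [0,oo). *)
Lemma hinv_lt0 t : t < 0 -> hinv f t = 0.
Proof.
move=> t0; rewrite /hinv.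
have -> : [set s : R | 0 <= s /\ t < f s] = `[0, +oo[%classic.
  apply/seteqP; split => s /=; rewrite in_itv /= andbT; first by case.
  by move=> s0; split => //; rewrite (lt_le_trans t0) // homeo_ge0.
by rewrite inf_itv // bnd_simp.
Qed.

(* The Galois connection between f and hinv f: this is the identity
   {hinv f t <= u} = {t <= f u} behind the duality of stopping times and
   adapted time changes. *)
Lemma hinv_le t u : 0 <= t -> 0 <= u -> (hinv f t <= u) = (t <= f u).
Proof. by move=> t0 u0; rewrite -(homeo_le (hinv_ge0 t0) u0) homeo_hinv. Qed.

Lemma le_hinv t u : 0 <= t -> 0 <= u -> (u <= hinv f t) = (f u <= t).
Proof. by move=> t0 u0; rewrite -(homeo_le u0 (hinv_ge0 t0)) homeo_hinv. Qed.

Lemma hinv_lt t u : 0 <= t -> 0 <= u -> (hinv f t < hinv f u) = (t < u).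
Proof.
by move=> t0 u0; rewrite -(homeo_lt (hinv_ge0 t0) (hinv_ge0 u0)) !homeo_hinv.
Qed.

Lemma hinv_gt0 t : 0 < t -> 0 < hinv f t.
Proof.
move=> t0; have t0' := ltW t0.
rewrite lt_neqAle hinv_ge0 // andbT; apply/eqP => e.
by move: (homeo_hinv t0'); rewrite -e homeo0 => z; rewrite z ltxx in t0.
Qed.

(* Continuity of hinv f from the right and from the left, in the form
   needed to transport the regularity of counting paths. *)
Lemma hinv_right_cont t e : 0 <= t -> 0 < e ->
  exists2 d, 0 < d & forall s, t <= s -> s < t + d -> hinv f s < hinv f t + e.
Proof.
move=> t0 e0; have gt0 := hinv_ge0 t0.
have ge0' : 0 <= hinv f t + e by rewrite addr_ge0 // ltW.
exists (f (hinv f t + e) - t).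
  by rewrite subr_gt0 -{1}(homeo_hinv t0) homeo_lt // ltrDl.
move=> s ts; rewrite addrC subrK => sf.
have s0 : 0 <= s by rewrite (le_trans t0).
by rewrite ltNge le_hinv // -ltNge.
Qed.

Lemma hinv_left_cont t e : 0 < t -> 0 < e ->
  exists2 d, 0 < d & d <= t /\
    forall s, t - d < s -> s < t -> hinv f t - e < hinv f s.
Proof.
move=> t0 e0; have t0' := ltW t0; have gt0 := hinv_gt0 t0.
pose e' := Num.min e (hinv f t).
have e'0 : 0 < e' by rewrite lt_min e0.
have e'g : e' <= hinv f t by rewrite ge_min lexx orbT.
have e'e : e' <= e by rewrite ge_min lexx.
have h0 : 0 <= hinv f t - e' by rewrite subr_ge0.
exists (t - f (hinv f t - e')).
  rewrite subr_gt0 -{2}(homeo_hinv t0') homeo_lt //; lra.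
split; first by rewrite lerBlDr lerDl homeo_ge0.
move=> s; rewrite opprB addrCA subrr addr0 => fs st.
have s0 : 0 <= s by rewrite (le_trans (homeo_ge0 h0)) // ltW.
apply: (le_lt_trans (lerB (lexx _) e'e)).
by rewrite ltNge hinv_le // -ltNge.
Qed.

Lemma counting_path_hinv (w : R -> nat) :
  is_counting_path w -> is_counting_path (fun t => w (hinv f t)).
Proof.
case=> w0 wm wr wl; split.
- by rewrite hinv0.
- move=> s t s0 st; apply: wm; first exact: hinv_ge0.
  by rewrite hinv_le ?hinv_ge0 ?(le_trans s0) // homeo_hinv // (le_trans s0).
- move=> t t0; have [e e0 he] := wr _ (hinv_ge0 t0).
  have [d d0 hd] := hinv_right_cont t0 e0.
  exists d => // s ts sd; apply: he; last exact: hd.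
  have s0 : 0 <= s by exact: le_trans t0 ts.
  by rewrite hinv_le // ?homeo_hinv // hinv_ge0.
- move=> t t0; have [e e0 he] := wl _ (hinv_gt0 t0).
  have [d d0 [dt hd]] := hinv_left_cont t0 e0.
  exists d => // s ds st; apply: he; first exact: hd.
  have s0 : 0 <= s by rewrite (le_trans _ (ltW ds)) // subr_ge0.
  by rewrite hinv_lt // ltW.
Qed.

End HalflineHomeomorphism.

Section Enlargement.
Variable T : Type.
Implicit Types (G : set (set T)) (A B C E : set T).

Definition enlarge G E : set (set T) :=
  [set C | exists A B, [/\ G A, G B & C = (A `&` ~` E) `|` (B `&` E)]].

Lemma split_eventP E C A B :
  (forall w, ~ E w -> (C w <-> A w)) -> (forall w, E w -> (C w <-> B w)) ->
  C = (A `&` ~` E) `|` (B `&` E).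
Proof.
move=> hA hB; apply/seteqP; split => w /=.
- move=> Cw; have [Ew|nEw] := pselect (E w).
  + by right; split => //; apply/hB.
  + by left; split => //; apply/hA.
- case=> [[Aw nEw]|[Bw Ew]]; [exact/(hA _ nEw)|exact/(hB _ Ew)].
Qed.

Lemma split_eventE E C A B : C = (A `&` ~` E) `|` (B `&` E) ->
  (forall w, ~ E w -> (C w <-> A w)) /\ (forall w, E w -> (C w <-> B w)).
Proof.
move=> ->; split => w hw /=; split.
- by case=> [[]//|[_ ]].
- by move=> Aw; left.
- by case=> [[_ ]|[]].
- by move=> Bw; right.
Qed.

Lemma sigma_algebra_const G (p : Prop) :
  sigma_algebra setT G -> G [set _ : T | p].
Proof.
move=> [G0 GC _]; case: (pselect p) => hp.
  have -> : [set _ : T | p] = setT `\` set0.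
    by apply/seteqP; split => w /=; rewrite /setD /setT /set0 /=; tauto.
  exact: GC.
have -> : [set _ : T | p] = set0.
  by apply/seteqP; split => w /=; rewrite /set0 /=; tauto.
exact: G0.
Qed.

Lemma sigma_algebra_bigcapT G (X : (set T)^nat) :
  sigma_algebra setT G -> (forall n, G (X n)) -> G (\bigcap_n X n).
Proof.
move=> [G0 GC GU] GX.
have -> : \bigcap_n X n = setT `\` \bigcup_n (setT `\` X n).
  apply/seteqP; split => w /=.
  - by move=> h; split => // -[n _ [_]]; apply; exact: h.
  - move=> [_ h] n _; apply: contrapT => nX; apply: h; exists n => //.
by apply: (GC); apply: (GU) => n; apply: (GC).
Qed.

Lemma sigma_algebra_enlarge G E :
  sigma_algebra setT G -> sigma_algebra setT (enlarge G E).
Proof.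
move=> [G0 GC GU]; split.
- by exists set0, set0; split => //; apply: split_eventP.
- move=> C [A [B [GA GB CE]]]; have [hA hB] := split_eventE CE.
  exists (setT `\` A), (setT `\` B); split; [exact: GC|exact: GC|].
  apply: split_eventP => w hw /=;
    [have := hA w hw|have := hB w hw]; rewrite /setD /=; tauto.
- move=> C hC.
  have hC' n : exists p : set T * set T,
      [/\ G p.1, G p.2 & C n = (p.1 `&` ~` E) `|` (p.2 `&` E)].
    by have [A [B h]] := hC n; exists (A, B).
  have [AB hAB] := choice hC'.
  exists (\bigcup_n (AB n).1), (\bigcup_n (AB n).2); split.
  + by apply: GU => n; have [] := hAB n.
  + by apply: GU => n; have [] := hAB n.
  + apply: split_eventP => w hw; split => -[n _ hn]; exists n => //;
      have [_ _ /split_eventE[hA hB]] := hAB n; by [apply/hA|apply/hB].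
Qed.

End Enlargement.

Section EnlargedFiltration.
Variable R : realType.
Context {d : measure_display} {Omega : measurableType d}.
Variable F : R -> set (set Omega).
Hypothesis hF : is_filtration F.

Definition enlarge_filtration (E : set Omega) : R -> set (set Omega) :=
  fun t => enlarge (F t) E.

Lemma filtration_liminf t (X : nat -> set Omega) : 0 <= t ->
  (forall n, F (t + n.+1%:R^-1) (X n)) ->
  F t (\bigcup_k \bigcap_n X (n + k)%N).
Proof.
case: hF => Fsa _ Fmono Frc t0 hX; apply: Frc => // s ts.
have [K hK] := ltr_add_invr ts.
have s0 : 0 <= s by rewrite (le_trans t0) // ltW.
have -> : \bigcup_k \bigcap_n X (n + k)%N = \bigcup_k \bigcap_n X (n + k + K)%N.
  apply/seteqP; split => w /=.
  - move=> [k _ h]; exists k => // n _; rewrite -addnA (addnC k) addnA.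
    exact: h.
  - by move=> [k _ h]; exists (k + K)%N => // n _; rewrite addnA; exact: h.
have [_ _ GU] := Fsa s s0.
apply: GU => k; apply: sigma_algebra_bigcapT; first exact: Fsa.
move=> n; have h1 : 0 <= t + (n + k + K).+1%:R^-1.
  by rewrite addr_ge0 // invr_ge0 ler0n.
suff h2 : t + (n + k + K).+1%:R^-1 <= s by exact: Fmono h1 h2 _ (hX _).
apply: le_trans (ltW hK); rewrite lerD2l lef_pV2 ?posrE ?ltr0Sn // ler_nat.
by rewrite ltnS leq_addl.
Qed.

Lemma liminf_const (C : set Omega) (X : nat -> set Omega) w :
  (forall n, C w <-> X n w) -> (C w <-> (\bigcup_k \bigcap_n X (n + k)%N) w).
Proof.
move=> h; split => [Cw|[k _ hk]]; first by exists 0%N => // n _; apply/h.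
by apply/(h k); exact: (hk 0%N).
Qed.

Lemma enlarge_filtrationP (E : set Omega) :
  measurable E -> is_filtration (enlarge_filtration E).
Proof.
case: hF => Fsa Fm Fmono Frc mE; split.
- by move=> t t0; apply: sigma_algebra_enlarge; apply: Fsa.
- move=> t t0 C [A [B [FA FB ->]]].
  apply: measurableU; apply: measurableI => //;
    [exact: Fm FA|exact: measurableC|exact: Fm FB].
- move=> s t s0 st C [A [B [FA FB ->]]].
  by exists A, B; split; [exact: Fmono FA|exact: Fmono FB|].
- move=> t C t0 hC.
  have hC' n : exists p : set Omega * set Omega,
      [/\ F (t + n.+1%:R^-1) p.1, F (t + n.+1%:R^-1) p.2 &
        C = (p.1 `&` ~` E) `|` (p.2 `&` E)].
    have tn : t < t + n.+1%:R^-1 by rewrite ltrDl invr_gt0 ltr0Sn.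
    by have [A [B h]] := hC _ tn; exists (A, B).
  have [AB hAB] := choice hC'.
  exists (\bigcup_k \bigcap_n (AB (n + k)%N).1),
    (\bigcup_k \bigcap_n (AB (n + k)%N).2); split.
  + by apply: (filtration_liminf (X := fun m => (AB m).1)) => // n; have [] := hAB n.
  + by apply: (filtration_liminf (X := fun m => (AB m).2)) => // n; have [] := hAB n.
  + apply: split_eventP => w hw.
    * apply: (liminf_const (X := fun m => (AB m).1)) => n.
      by have [_ _ /split_eventE[hA _]] := hAB n; apply: hA.
    * apply: (liminf_const (X := fun m => (AB m).2)) => n.
      by have [_ _ /split_eventE[_ hB]] := hAB n; apply: hB.
Qed.

End EnlargedFiltration.

Section NullModification.
Variable R : realType.
Context {d : measure_display} {Omega : measurableType d}.
Variable P : probability Omega R.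
Variable E : set Omega.
Hypotheses (mE : measurable E) (PE : P E = 0%E).

Lemma integral_modification (f f' : Omega -> \bar R) (A A' : set Omega) :
  P.-integrable setT f -> measurable_fun setT f' ->
  (forall w, ~ E w -> f' w = f w) -> measurable A -> measurable A' ->
  (forall w, ~ E w -> (A' w <-> A w)) ->
  P.-integrable setT f' /\ (\int[P]_(w in A') f' w = \int[P]_(w in A) f w)%E.
Proof.
move=> hf mf' ff' mA mA' AA'.
have mf : measurable_fun setT f by case/integrableP: hf.
have hf' : P.-integrable setT f'.
  apply/(negligible_integrable mE measurableT mf' PE).
  apply: (eq_integrable (measurableD measurableT mE) f).
    by move=> w; rewrite inE => -[_ nE]; rewrite ff'.
  exact/(negligible_integrable mE measurableT mf PE).
split => //.
rewrite (negligible_integral mE mA' (integrableS measurableT mA' (@subsetT _ _) hf') PE).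
rewrite (negligible_integral mE mA (integrableS measurableT mA (@subsetT _ _) hf) PE).
have -> : A' `\` E = A `\` E.
  by apply/seteqP; split => w /= [h nE]; split => //; apply/(AA' w nE).
by apply: eq_integral => w; rewrite inE => -[_ nE]; rewrite ff'.
Qed.

Variable F : R -> set (set Omega).
Hypothesis hF : is_filtration F.

Lemma martingale_modification (M M' : R -> Omega -> R) (c : R -> R) :
  martingale P F M ->
  (forall t w, 0 <= t -> ~ E w -> M' t w = M t w) ->
  (forall t w, 0 <= t -> E w -> M' t w = c t) ->
  martingale P (enlarge_filtration F E) M'.
Proof.
move=> [adM intM eqM] offE onE.
have [Fsa Fm _ _] := hF; have [_ Fm' _ _] := enlarge_filtrationP hF mE.
have adM' : adapted (enlarge_filtration F E) M'.
  move=> t t0 B mB; exists (M t @^-1` B), [set _ | B (c t)]; split.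
  + exact: adM.
  + exact: sigma_algebra_const (Fsa t t0).
  + by apply: split_eventP => w hw /=; [rewrite offE|rewrite onE].
have mM' t : 0 <= t -> measurable_fun setT (fun w => (M' t w)%:E).
  move=> t0; apply/measurable_EFinP => _ Y mY; rewrite setTI.
  exact/(Fm' t t0)/adM'.
have transfer t A1 A : 0 <= t -> measurable A1 -> measurable A ->
    (forall w, ~ E w -> (A w <-> A1 w)) ->
    P.-integrable setT (fun w => (M' t w)%:E) /\
    (\int[P]_(w in A) (M' t w)%:E = \int[P]_(w in A1) (M t w)%:E)%E.
  move=> t0; apply: integral_modification (intM t t0) (mM' t t0) _.
  by move=> w nE; rewrite offE.
split => //.
- by move=> t t0; have [] := transfer t setT setT t0 measurableT measurableT.
- move=> s t A s0 st FA; have t0 : 0 <= t by exact: le_trans st.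
  have [A1 [B1 [FA1 _ /split_eventE[hA _]]]] := FA.
  have mA := Fm' s s0 A FA; have mA1 := Fm s s0 A1 FA1.
  have [_ ->] := transfer t A1 A t0 mA1 mA hA.
  have [_ ->] := transfer s A1 A s0 mA1 mA hA.
  exact: eqM.
Qed.

Definition infty_on (tau : Omega -> \bar R) (w : Omega) : \bar R :=
  if pselect (E w) then +oo%E else tau w.

Lemma infty_on_off tau w : ~ E w -> infty_on tau w = tau w.
Proof. by rewrite /infty_on => h; case: pselect. Qed.

Lemma infty_on_on tau w : E w -> infty_on tau w = +oo%E.
Proof. by rewrite /infty_on => h; case: pselect. Qed.

Lemma stopping_time_infty_on tau :
  stopping_time F tau -> stopping_time (enlarge_filtration F E) (infty_on tau).
Proof.
move=> st u u0; have [Fsa _ _ _] := hF.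
exists [set w | (tau w <= u%:E)%E], set0; split; first exact: st.
  by have [] := Fsa u u0.
apply: split_eventP => w hw /=; first by rewrite infty_on_off.
by rewrite infty_on_on // leye_eq.
Qed.

Lemma tmin_ge0 (t : R) (x : \bar R) : 0 <= t -> (0 <= x)%E -> 0 <= tmin t x.
Proof.
move=> t0 x0; rewrite /tmin minEle; case: ifPn => //= h.
by move: x0 h; case: x => [r||] //=; rewrite lee_fin.
Qed.

(* A local martingale whose localizing sequence diverges off E, modified on
   E into a deterministic process, is a local martingale for the filtration
   enlarged by E (localized by the times equal to +oo on E). *)
Lemma local_martingale_modification (M M' : R -> Omega -> R) (c : R -> R)
    (tau : nat -> Omega -> \bar R) :
  (forall n, stopping_time F (tau n)) -> (forall n w, (0 <= tau n w)%E) ->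
  (forall n w, (tau n w <= tau n.+1 w)%E) ->
  (forall w, ~ E w -> (tau n w)%E @[n --> \oo] --> +oo%E) ->
  (forall n, martingale P F (stopped M (tau n))) ->
  (forall t w, 0 <= t -> ~ E w -> M' t w = M t w) ->
  (forall t w, 0 <= t -> E w -> M' t w = c t) ->
  local_martingale P (enlarge_filtration F E) M'.
Proof.
move=> st tau0 taumono taucv mart offE onE.
exists (fun n => infty_on (tau n)); split.
- by move=> n; apply: stopping_time_infty_on.
- by move=> n w; case: (pselect (E w)) => h;
    [rewrite infty_on_on|rewrite infty_on_off].
- by move=> n w; case: (pselect (E w)) => h;
    [rewrite !infty_on_on|rewrite !infty_on_off].
- apply: aeW => w; case: (pselect (E w)) => h.
    under eq_fun => n do rewrite infty_on_on //.
    exact: cvg_cst.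
  by under eq_fun => n do rewrite infty_on_off //; exact: taucv.
- move=> n; apply: (martingale_modification (c := c) (mart n)) => t w t0 hw.
    by rewrite /stopped infty_on_off //; apply/offE/hw/tmin_ge0.
  by rewrite /stopped infty_on_on // /tmin minEle leey /= onE.
Qed.

End NullModification.

Lemma ae_null_event (R : realType) d (Omega : measurableType d)
    (P : probability Omega R) (Q : Omega -> Prop) :
  (\forall w \ae P, Q w) ->
  exists E, [/\ measurable E, P E = 0%E & forall w, ~ E w -> Q w].
Proof.
case=> E [mE PE sE]; exists E; split => // w nE.
by apply: contrapT => nQ; apply: nE; apply: sE.
Qed.

Lemma ae_and (R : realType) d (Omega : measurableType d)
    (P : probability Omega R) (Q1 Q2 : Omega -> Prop) :
  (\forall w \ae P, Q1 w) -> (\forall w \ae P, Q2 w) ->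
  (\forall w \ae P, Q1 w /\ Q2 w).
Proof. by move=> h1 h2; apply: filterS2 h1 h2. Qed.

Lemma sigma_algebra_preimage (R : realType) (T : Type) (G : set (set T))
    (f : T -> R) :
  sigma_algebra setT G -> (forall x, G (f @^-1` `[x, +oo[)) ->
  forall B, measurable B -> G (f @^-1` B).
Proof.
move=> [G0 GC GU] hG B mB.
have : (@RGenCInfty.G R).-sigma.-measurable B by rewrite -RGenCInfty.measurableE.
apply: (@smallest_sub _ _ _ [set A | G (f @^-1` A)]) => /=.
- split => /=.
  + by rewrite preimage_set0.
  + move=> A hA; suff -> : f @^-1` (setT `\` A) = setT `\` (f @^-1` A) by exact: GC.
    by apply/seteqP; split => w /=.
  + by move=> A hA; rewrite preimage_bigcup; apply: GU.
- by move=> A [x ->].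
Qed.

Lemma measurable_const d (Omega : measurableType d) (p : Prop) :
  measurable [set _ : Omega | p].
Proof.
case: (pselect p) => h.
  by have -> : [set _ : Omega | p] = setT by apply/seteqP; split.
by have -> : [set _ : Omega | p] = set0 by apply/seteqP; split.
Qed.

(* Off the event where its localizing sequence does not diverge, every value
   M t (t >= 0) of a local martingale is measurable: it is the eventual value
   of the adapted stopped processes. *)
Lemma local_martingale_preimage (R : realType) d (Omega : measurableType d)
    (P : probability Omega R) (F : R -> set (set Omega)) (M : R -> Omega -> R)
    (tau : nat -> Omega -> \bar R) (E : set Omega) (t : R) (B : set R) :
  is_filtration F -> 0 <= t -> measurable B ->
  (forall n, martingale P F (stopped M (tau n))) ->
  (forall w, ~ E w -> (tau n w)%E @[n --> \oo] --> +oo%E) ->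
  exists2 A, measurable A & forall w, ~ E w -> (A w <-> B (M t w)).
Proof.
move=> [_ Fm _ _] t0 mB mart taucv.
exists (\bigcup_m \bigcap_n (stopped M (tau (n + m)%N) t @^-1` B)).
  apply: bigcupT_measurable => m; apply: bigcapT_measurable => n.
  by apply: (Fm t t0); have [ad _ _] := mart (n + m)%N; exact: ad.
move=> w nE; have [m0 _ hm0] := cvgey_ge (taucv w nE) t.
have stoppedE n : (m0 <= n)%N -> stopped M (tau n) t w = M t w.
  by move=> hn; rewrite /stopped /tmin minEle (hm0 n hn).
split.
- by move=> [m _ /(_ m0 I)]; rewrite /= stoppedE ?leq_addr.
- by move=> hB; exists m0 => // n _ /=; rewrite stoppedE ?leq_addl.
Qed.

Lemma counting_path0 (R : realType) : is_counting_path (fun _ : R => 0%N).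
Proof. by split => // t t0; exists 1 => //; rewrite ltr01. Qed.

Section ZeroOn.
Variable R : realType.
Context {d : measure_display} {Omega : measurableType d}.

Definition zero_on (E : set Omega) (X : Omega -> R -> nat) (w : Omega) : R -> nat :=
  if pselect (E w) then (fun _ => 0%N) else X w.

Lemma zero_on_off E X w : ~ E w -> zero_on E X w = X w.
Proof. by rewrite /zero_on => h; case: pselect. Qed.

Lemma zero_on_on E X w : E w -> zero_on E X w = (fun _ => 0%N).
Proof. by rewrite /zero_on => h; case: pselect. Qed.

Lemma point_process_zero_on (P : probability Omega R) E X : measurable E ->
  (forall t k, exists2 A, measurable A & forall w, ~ E w -> (A w <-> X w t = k)) ->
  (forall w, ~ E w -> is_counting_path (X w)) ->
  is_point_process P (zero_on E X).
Proof.
move=> mE hX hc; split.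
- move=> t k; have [A mA hA] := hX t k.
  have -> : [set w | zero_on E X w t = k] =
      (A `&` ~` E) `|` ([set _ | 0%N = k] `&` E).
    apply: split_eventP => w hw /=; last by rewrite zero_on_on.
    by rewrite zero_on_off //; have := hA w hw; tauto.
  apply: measurableU; apply: measurableI => //; first exact: measurableC.
  exact: measurable_const.
- apply: aeW => w; case: (pselect (E w)) => h.
    by rewrite zero_on_on //; exact: counting_path0.
  by rewrite zero_on_off //; exact: hc.
Qed.

End ZeroOn.

Section TimeChange.
Variable R : realType.
Variable y : (R -> nat) -> R -> R.
Hypothesis hy : forall eta, is_counting_path eta -> incr_homeo_halfline (y eta).
Context {d : measure_display} {Omega : measurableType d}.
Variable F : R -> set (set Omega).
Hypothesis hF : is_filtration F.
Variables (E : set Omega) (Z : Omega -> R -> nat).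
Hypotheses (mE : measurable E) (cZ : forall w, ~ E w -> is_counting_path (Z w)).

(* Off E, {x <= y*(Z,t)} = {y(Z,x) <= t}: if every y(Z,t) is a stopping
   time, then y*(Z,.) is adapted. *)
Lemma y_star_adapted :
  (forall t, 0 <= t -> stopping_time F (fun w => (y (Z w) t)%:E)) ->
  adapted (enlarge_filtration F E) (fun t w => y_star y (zero_on E Z w) t).
Proof.
move=> hst t t0 B mB; have [Fsa _ _ _] := hF.
have [Fsa' _ _ _] := enlarge_filtrationP hF mE.
apply: (sigma_algebra_preimage (Fsa' t t0)) => // x.
have onE : F t [set _ | x <= y_star y (fun _ => 0%N) t].
  exact: sigma_algebra_const (Fsa t t0).
have [x0|x0] := leP x 0.
- exists setT, [set _ | x <= y_star y (fun _ => 0%N) t]; split => //.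
    exact: (sigma_algebra_const True (Fsa t t0)).
  apply: split_eventP => w hw /=; rewrite in_itv /= andbT; last by rewrite zero_on_on.
  rewrite zero_on_off // y_star_hinv; split => // _.
  exact: le_trans x0 (hinv_ge0 (hy (cZ hw)) t0).
- exists [set w | ((y (Z w) x)%:E <= t%:E)%E],
    [set _ | x <= y_star y (fun _ => 0%N) t]; split => //.
    exact: hst (ltW x0) _ t0.
  apply: split_eventP => w hw /=; rewrite in_itv /= andbT; last by rewrite zero_on_on.
  by rewrite zero_on_off // y_star_hinv (le_hinv (hy (cZ hw)) t0 (ltW x0)) lee_fin.
Qed.

Lemma y_stopping_time :
  adapted F (fun t w => y_star y (Z w) t) ->
  forall t, 0 <= t ->
    stopping_time (enlarge_filtration F E) (fun w => (y (zero_on E Z w) t)%:E).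
Proof.
move=> had t t0 u u0; have [Fsa _ _ _] := hF.
exists ((fun w => y_star y (Z w) u) @^-1` `[t, +oo[),
  [set _ | ((y (fun _ => 0%N) t)%:E <= u%:E)%E]; split.
- exact: had u u0 _ (measurable_itv _).
- exact: sigma_algebra_const (Fsa u u0).
- apply: split_eventP => w hw /=; last by rewrite zero_on_on.
  rewrite zero_on_off // in_itv /= andbT y_star_hinv.
  by rewrite (le_hinv (hy (cZ hw)) u0 t0) lee_fin.
Qed.

Lemma point_process_time_change (P : probability Omega R)
    (tau : nat -> Omega -> \bar R) :
  (forall n, martingale P F
     (stopped (fun t w => (Z w (y_star y (Z w) t))%:R - t) (tau n))) ->
  (forall w, ~ E w -> (tau n w)%E @[n --> \oo] --> +oo%E) ->
  is_point_process P (zero_on E (fun w t => Z w (y_star y (Z w) t))).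
Proof.
move=> mart taucv; apply: point_process_zero_on => // [t k|w hw].
- case: (ltP t 0) => t0.
    exists [set _ | 0%N = k]; first exact: measurable_const.
    move=> w hw; have [Z0 _ _ _] := cZ hw.
    by rewrite y_star_hinv (hinv_lt0 (hy (cZ hw)) t0) Z0.
  have [A mA hA] := local_martingale_preimage (B := [set k%:R - t]) hF t0
    (measurable_set1 _) mart taucv.
  exists A => // w hw; rewrite (hA w hw) /=.
  by split => [/addIr/eqP|->//]; rewrite eqr_nat => /eqP.
- exact: (counting_path_hinv (hy (cZ hw)) (cZ hw)).
Qed.

End TimeChange.

(* From a weak solution (Z, N) of g-H_y: (Z, F) solves g-H^m_y, after
   removing the null event off which Z has counting paths, Z = N o y(Z) and
   the localizing sequence diverges; there N = Z o y*(Z). *)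
Lemma gH_to_gHm (R : realType) (y : (R -> nat) -> R -> R) :
  (forall eta, is_counting_path eta -> incr_homeo_halfline (y eta)) ->
  exists_weak_gH_solution y -> exists_gHm_solution y.
Proof.
move=> hy [d [Om [P [F [Z [N [hF [[mZ aeZ] _ hst hlm hrel]]]]]]]].
have [tau [tst tau0 taumono taucv mart]] := hlm.
have [E [mE PE hE]] := ae_null_event
  (ae_and aeZ (ae_and hrel taucv)).
have cZ w : ~ E w -> is_counting_path (Z w) by move=> /hE[].
exists d, Om, P, (enlarge_filtration F E), (zero_on E Z).
split; first exact: enlarge_filtrationP.
split.
- apply: point_process_zero_on => // t k.
  by exists [set w | Z w t = k]; [exact: mZ|].
- exact: y_star_adapted.
- apply: (local_martingale_modification (M := fun t w => (N w t)%:R - t)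
    (c := fun t => - t) mE PE hF tst tau0 taumono _ mart).
  + by move=> w /hE[_ []].
  + move=> t w t0 hw; have [_ [rel _]] := hE w hw.
    have hf := hy _ (cZ _ hw).
    by rewrite zero_on_off // y_star_hinv (rel _ (hinv_ge0 hf t0)) homeo_hinv.
  + by move=> t w t0 hw; rewrite zero_on_on // sub0r.
Qed.

Lemma gHm_to_gH (R : realType) (y : (R -> nat) -> R -> R) :
  (forall eta, is_counting_path eta -> incr_homeo_halfline (y eta)) ->
  exists_gHm_solution y -> exists_weak_gH_solution y.
Proof.
move=> hy [d [Om [P [F [Z [hF [[mZ aeZ] had hlm]]]]]]].
have [tau [tst tau0 taumono taucv mart]] := hlm.
have [E [mE PE hE]] := ae_null_event (ae_and aeZ taucv).
have cZ w : ~ E w -> is_counting_path (Z w) by move=> /hE[].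
pose N w t := Z w (y_star y (Z w) t).
exists d, Om, P, (enlarge_filtration F E), (zero_on E Z), (zero_on E N).
split; first exact: enlarge_filtrationP.
split.
- apply: point_process_zero_on => // t k.
  by exists [set w | Z w t = k]; [exact: mZ|].
- exact: point_process_time_change mart (fun w hw => proj2 (hE w hw)).
- exact: y_stopping_time.
- apply: (local_martingale_modification (M := fun t w => (Z w (y_star y (Z w) t))%:R - t)
    (c := fun t => - t) mE PE hF tst tau0 taumono _ mart).
  + by move=> w /hE[].
  + by move=> t w t0 hw; rewrite zero_on_off.
  + by move=> t w t0 hw; rewrite zero_on_on // sub0r.
- apply: aeW => w t t0; case: (pselect (E w)) => hw; first by rewrite !zero_on_on.
  by rewrite !zero_on_off // /N y_star_hinv (hinv_homeo (hy _ (cZ _ hw)) t0).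
Qed.

Theorem mainTheorem16 (R : realType) (y ydot : (R -> nat) -> R -> R) :
  admissible_clock y ydot ->
  (exists_weak_gH_solution y <-> exists_gHm_solution y).
Proof.
move=> [_ hclock].
have hy eta : is_counting_path eta -> incr_homeo_halfline (y eta).
  by move=> /hclock[].
by split; [exact: gH_to_gHm|exact: gHm_to_gH].
Qed.
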